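(* Let $(\mathcal{M},\times,1)$ be a cartesian monoidal category with equivalences. Let $(X,\xi):(\Delta,+,0)\to(\mathcal{M},\times,1)$ be a colax monoidal functor and let $Y:(\Delta^+)^{\mathrm{op}}\to\mathcal{M}$ be the functor corresponding to $(X,\xi)$ under the isomorphism described in the context. The following are equivalent: (1) $(X,\xi)$ is a homotopy monoid, i.e. $\xi_0$ and every $\xi_{m,n}$ are equivalences; (2) for all $m,n\ge0$ the map $(Y(\alpha^1_{m,n}),Y(\alpha^2_{m,n})):Y[m+n]\to Y[m]\times Y[n]$ is an equivalence, and so is the unique map $Y[0]\to1$; (3) for every $n\ge0$ the map $(Y(\beta^n_0),\dots,Y(\beta^n_{n-1})):Y[n]\to Y[1]^n$ is an equivalence.
   Context: A monoidal category with equivalences is a monoidal category with a class of morphisms (equivalences) containing all isomorphisms, satisfying two-out-of-three for composition, and closed under $\otimes$; cartesian means the monoidal structure is given by chosen finite products $\times$ and terminal object $1$. $\Delta$: objects $n=\{0,\dots,n-1\}$ ($n\ge0$), order-preserving maps, monoidal under ordinal sum $+$ with unit $0$. $\Delta^+$: objects $[n]=\{0,\dots,n\}$ ($n\ge0$), order-preserving maps. A colax monoidal functor $(X,\xi)$ consists of a functor $X$ with natural (not necessarily invertible) maps $\xi_{m,n}:X(m+n)\to X(m)\times X(n)$ and $\xi_0:X(0)\to1$ satisfying coassociativity and counit axioms. There is an isomorphism of categories between colax monoidal functors $(\Delta,+,0)\to(\mathcal{M},\times,1)$ and functors $(\Delta^+)^{\mathrm{op}}\to\mathcal{M}$ under which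 $(X,\xi)$ corresponds to a $Y$ with $Y[n]=X(n)$ for all $n$, and with $Y(\alpha^1_{m,n})$ and $Y(\alpha^2_{m,n})$ equal to the first and second components of $\xi_{m,n}$. Here $\alpha^1_{m,n}:[m]\to[m+n]$, $\alpha^1_{m,n}(i)=i$, and $\alpha^2_{m,n}:[n]\to[m+n]$, $\alpha^2_{m,n}(i)=m+i$; for $0\le j<n$, $\beta^n_j:[1]\to[n]$ is $\beta^n_j(i)=i+j$. *)

From mathcomp Require Import all_boot.
From mathcomp Require Import zify.
Set Implicit Arguments.
Unset Strict Implicit.
Unset Printing Implicit Defensive.

Record category := Category {
  Ob :> Type;
  Hom : Ob -> Ob -> Type;
  idm : forall a, Hom a a;
  compm : forall a b c, Hom b c -> Hom a b -> Hom a c;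
  compm_idl : forall a b (f : Hom a b), compm (idm b) f = f;
  compm_idr : forall a b (f : Hom a b), compm f (idm a) = f;
  compm_assoc : forall a b c d (h : Hom c d) (g : Hom b c) (f : Hom a b),
      compm h (compm g f) = compm (compm h g) f }.
Arguments Hom {_} _ _.
Arguments idm {_} a.
Arguments compm {_ _ _ _} _ _.

Definition is_iso (C : category) (a b : C) (f : Hom a b) : Prop :=
  exists g : Hom b a, compm g f = idm a /\ compm f g = idm b.

Record cartesian (C : category) := Cartesian {
  cprod : C -> C -> C;
  pr1 : forall a b, Hom (cprod a b) a;
  pr2 : forall a b, Hom (cprod a b) b;
  pairm : forall c a b, Hom c a -> Hom c b -> Hom c (cprod a b);
  pairm_pr1 : forall c a b (f : Hom c a) (g : Hom c b), compm (pr1 a b) (pairm f g) = f;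
  pairm_pr2 : forall c a b (f : Hom c a) (g : Hom c b), compm (pr2 a b) (pairm f g) = g;
  pairm_uniq : forall c a b (h : Hom c (cprod a b)),
      h = pairm (compm (pr1 a b) h) (compm (pr2 a b) h);
  terminal : C;
  bang : forall a, Hom a terminal;
  bang_uniq : forall a (h : Hom a terminal), h = bang a }.
Arguments cprod {C} _ _ _.
Arguments pr1 {C} _ _ _.
Arguments pr2 {C} _ _ _.
Arguments pairm {C} _ {_ _ _} _ _.
Arguments terminal {C} _.
Arguments bang {C} _ _.

Definition fprod (C : category) (P : cartesian C) (a b a' b' : C)
  (f : Hom a b) (g : Hom a' b') : Hom (cprod P a a') (cprod P b b') :=
  pairm P (compm f (pr1 P a a')) (compm g (pr2 P a a')).

Definition cassoc (C : category) (P : cartesian C) (a b c : C) :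
  Hom (cprod P (cprod P a b) c) (cprod P a (cprod P b c)) :=
  pairm P (compm (pr1 P a b) (pr1 P _ c))
          (pairm P (compm (pr2 P a b) (pr1 P _ c)) (pr2 P _ c)).

Fixpoint cpow (C : category) (P : cartesian C) (a : C) (n : nat) : C :=
  match n with 0 => terminal P | n'.+1 => cprod P a (cpow P a n') end.

Fixpoint tup (C : category) (P : cartesian C) (c a : C) (n : nat) :
  ('I_n -> Hom c a) -> Hom c (cpow P a n) :=
  match n with
  | 0 => fun _ => bang P c
  | n'.+1 => fun fs => pairm P (fs ord0) (tup P (fun j : 'I_n' => fs (lift ord0 j)))
  end.

Record equivalences (C : category) (P : cartesian C)
    (W : forall a b : C, Hom a b -> Prop) : Prop := {
  weq_iso : forall (a b : C) (f : Hom a b), is_iso f -> W a b f;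
  weq_comp : forall (a b c : C) (f : Hom a b) (g : Hom b c),
      W _ _ f -> W _ _ g -> W _ _ (compm g f);
  weq_left : forall (a b c : C) (f : Hom a b) (g : Hom b c),
      W _ _ f -> W _ _ (compm g f) -> W _ _ g;
  weq_right : forall (a b c : C) (f : Hom a b) (g : Hom b c),
      W _ _ g -> W _ _ (compm g f) -> W _ _ f;
  weq_tensor : forall (a b a' b' : C) (f : Hom a b) (g : Hom a' b'),
      W _ _ f -> W _ _ g -> W _ _ (fprod P f g) }.

(* Delta: object n is {0,...,n-1} = 'I_n; morphisms: order-preserving maps.
   Delta^+: object [n] = {0,...,n} = 'I_n.+1, i.e. Delta^+([m],[n]) = Dhom m.+1 n.+1. *)
Definition monob m n (f : {ffun 'I_m -> 'I_n}) : bool :=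
  [forall i : 'I_m, forall j : 'I_m, (i <= j) ==> (f i <= f j)].

Definition Dhom m n := {f : {ffun 'I_m -> 'I_n} | monob f}.

Definition Dapp m n (f : Dhom m n) (i : 'I_m) : 'I_n := sval f i.

Lemma monobP m n (f : 'I_m -> 'I_n) :
  (forall i j : 'I_m, i <= j -> f i <= f j) -> monob [ffun i => f i].
Proof.
move=> H; apply/forallP => i; apply/forallP => j; apply/implyP => hij.
by rewrite !ffunE; apply: H.
Qed.

Definition mkD m n (f : 'I_m -> 'I_n)
  (H : forall i j : 'I_m, i <= j -> f i <= f j) : Dhom m n :=
  exist _ [ffun i => f i] (monobP H).

Lemma DappM m n (f : Dhom m n) (i j : 'I_m) : i <= j -> Dapp f i <= Dapp f j.
Proof.
case: f => f /= Hf hij; rewrite /Dapp /=.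
by move: Hf => /forallP /(_ i) /forallP /(_ j) /implyP; apply.
Qed.

Definition Did n : Dhom n n := @mkD n n (fun i => i) (fun i j h => h).

Lemma Dcomp_mono m n p (g : Dhom n p) (f : Dhom m n) (i j : 'I_m) :
  i <= j -> Dapp g (Dapp f i) <= Dapp g (Dapp f j).
Proof. by move=> h; apply: DappM; apply: DappM. Qed.

Definition Dcomp m n p (g : Dhom n p) (f : Dhom m n) : Dhom m p :=
  mkD (@Dcomp_mono m n p g f).

(* the identity-on-elements map n -> n' for n = n' (used for strict associativity
   and unit constraints of (Delta,+,0)) *)
Definition Dcast m n (e : m = n) : Dhom m n :=
  @mkD m n (cast_ord e) (fun i j h => h).

Definition Dsum_fun m m' n n' (f : Dhom m n) (g : Dhom m' n') (i : 'I_(m + m')) :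
  'I_(n + n') :=
  match split i with
  | inl a => lshift n' (Dapp f a)
  | inr b => rshift n (Dapp g b)
  end.

Lemma Dsum_mono m m' n n' (f : Dhom m n) (g : Dhom m' n') (i j : 'I_(m + m')) :
  i <= j -> Dsum_fun f g i <= Dsum_fun f g j.
Proof.
rewrite /Dsum_fun.
case: splitP => [a ea|a ea]; case: splitP => [b eb|b eb] /=; rewrite ea eb => h.
- exact: DappM.
- have := ltn_ord (Dapp f a); lia.
- have := ltn_ord a; have := ltn_ord b; lia.
- rewrite leq_add2l; apply: DappM; lia.
Qed.

Definition Dsum m m' n n' (f : Dhom m n) (g : Dhom m' n') : Dhom (m + m') (n + n') :=
  mkD (@Dsum_mono m m' n n' f g).

Lemma alpha1_le m n : m.+1 <= (m + n).+1.
Proof. by rewrite ltnS leq_addr. Qed.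

Definition alpha1 m n : Dhom m.+1 (m + n).+1 :=
  @mkD m.+1 (m + n).+1 (widen_ord (alpha1_le m n)) (fun i j h => h).

Lemma alpha2_lt m n (i : 'I_n.+1) : m + i < (m + n).+1.
Proof. have := ltn_ord i; lia. Qed.

Definition alpha2_fun m n (i : 'I_n.+1) : 'I_(m + n).+1 := Ordinal (alpha2_lt m i).

Lemma alpha2_mono m n (i j : 'I_n.+1) : i <= j -> alpha2_fun m i <= alpha2_fun m j.
Proof. by rewrite /= leq_add2l. Qed.

Definition alpha2 m n : Dhom n.+1 (m + n).+1 := mkD (@alpha2_mono m n).

Lemma beta_lt n (j : 'I_n) (i : 'I_2) : i + j < n.+1.
Proof. have := ltn_ord i; have := ltn_ord j; lia. Qed.

Definition beta_fun n (j : 'I_n) (i : 'I_2) : 'I_n.+1 := Ordinal (beta_lt j i).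

Lemma beta_mono n (j : 'I_n) (i i' : 'I_2) : i <= i' -> beta_fun j i <= beta_fun j i'.
Proof. by rewrite /= leq_add2r. Qed.

Definition beta n (j : 'I_n) : Dhom 2 n.+1 := mkD (@beta_mono n j).

Record DFunctor (C : category) := DFunctorMk {
  Fo : nat -> C;
  Fh : forall m n, Dhom m n -> Hom (Fo m) (Fo n);
  Fh_id : forall n, Fh (Did n) = idm (Fo n);
  Fh_comp : forall m n p (g : Dhom n p) (f : Dhom m n),
      Fh (Dcomp g f) = compm (Fh g) (Fh f) }.
Arguments Fh {C} _ {_ _} _.

Record DPopFunctor (C : category) (Yo : nat -> C) := DPopFunctorMk {
  Yh : forall m n, Dhom m.+1 n.+1 -> Hom (Yo n) (Yo m);
  Yh_id : forall n, Yh (Did n.+1) = idm (Yo n);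
  Yh_comp : forall m n p (g : Dhom n.+1 p.+1) (f : Dhom m.+1 n.+1),
      Yh (Dcomp g f) = compm (Yh f) (Yh g) }.
Arguments Yh {C Yo} _ {_ _} _.

Record colax (C : category) (P : cartesian C) (X : DFunctor C) := ColaxMk {
  xi : forall m n, Hom (Fo X (m + n)) (cprod P (Fo X m) (Fo X n));
  xi0 : Hom (Fo X 0) (terminal P);
  xi_nat : forall m m' n n' (f : Dhom m n) (g : Dhom m' n'),
      compm (xi n n') (Fh X (Dsum f g)) = compm (fprod P (Fh X f) (Fh X g)) (xi m m');
  xi_coassoc : forall m n p,
      compm (cassoc P _ _ _) (compm (fprod P (xi m n) (idm (Fo X p))) (xi (m + n) p))
      = compm (fprod P (idm (Fo X m)) (xi n p))
             (compm (xi m (n + p)) (Fh X (Dcast (esym (addnA m n p)))));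
  xi_counit_l : forall n,
      compm (pr2 P _ _) (compm (fprod P xi0 (idm (Fo X n))) (xi 0 n))
      = Fh X (Dcast (add0n n));
  xi_counit_r : forall n,
      compm (pr1 P _ _) (compm (fprod P (idm (Fo X n)) xi0) (xi n 0))
      = Fh X (Dcast (addn0 n)) }.
Arguments xi {C P X} _ _ _.
Arguments xi0 {C P X} _.

(* Under the correspondence, xi_{m,n} is the pairing of Y(alpha^1_{m,n}) and
   Y(alpha^2_{m,n}) and xi_0 is the unique map to 1, so (1) and (2) say the
   same thing.  For (2) <-> (3), the Segal map s_n of (3) satisfies
   (s_m x s_n) o (Y alpha^1, Y alpha^2) = e o s_{m+n}, where e is the canonical
   isomorphism Y[1]^(m+n) ~ Y[1]^m x Y[1]^n, because beta^{m+n} restricted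
   along alpha^1 and alpha^2 gives the beta^m and beta^n.  Two-out-of-three
   then propagates equivalences in both directions; from (2) to (3) by
   induction on n, starting from s_0 = (Y[0] -> 1) and s_1 = (id, !). *)
From Pilot Require Import Defs.
From mathcomp Require Import all_boot.
From mathcomp Require Import zify.
Set Implicit Arguments.
Unset Strict Implicit.
Unset Printing Implicit Defensive.

Lemma prod_ext (C : category) (P : cartesian C) (c a b : C)
    (h h' : Hom c (cprod P a b)) :
  compm (pr1 P a b) h = compm (pr1 P a b) h' ->
  compm (pr2 P a b) h = compm (pr2 P a b) h' -> h = h'.
Proof. by move=> e1 e2; rewrite (pairm_uniq h) (pairm_uniq h') e1 e2. Qed.

Section CartesianPower.
Variables (C : category) (P : cartesian C) (a : C).

Fixpoint cpow_proj (n : nat) : 'I_n -> Hom (cpow P a n) a :=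
  match n with
  | 0 => fun j => False_rect _ (notF (ltn_ord j))
  | n'.+1 => fun j =>
      if unlift ord0 j is Some k then compm (@cpow_proj n' k) (pr2 P a _)
      else pr1 P a _
  end.

Lemma cpow_proj0 n : cpow_proj (ord0 : 'I_n.+1) = pr1 P a _.
Proof. by rewrite /= unlift_none. Qed.

Lemma cpow_projS n (k : 'I_n) :
  cpow_proj (lift ord0 k) = compm (cpow_proj k) (pr2 P a _).
Proof. by rewrite /= liftK. Qed.

Lemma cpow_proj_tup c n (fs : 'I_n -> Hom c a) j :
  compm (cpow_proj j) (tup P fs) = fs j.
Proof.
elim: n fs j => [|n IH] fs j; first by case: j.
case: (unliftP ord0 j) => [k ->|->].
- by rewrite cpow_projS -compm_assoc pairm_pr2 IH.
- by rewrite cpow_proj0 pairm_pr1.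
Qed.

Lemma cpow_ext c n (h h' : Hom c (cpow P a n)) :
  (forall j, compm (cpow_proj j) h = compm (cpow_proj j) h') -> h = h'.
Proof.
elim: n h h' => [|n IH] h h' eh /=; first by rewrite (bang_uniq h) (bang_uniq h').
apply: prod_ext; first by have := eh ord0; rewrite cpow_proj0.
by apply: IH => k; have := eh (lift ord0 k); rewrite cpow_projS -!compm_assoc.
Qed.

Lemma tup_comp c d n (fs : 'I_n -> Hom c a) (h : Hom d c) :
  compm (tup P fs) h = tup P (fun j => compm (fs j) h).
Proof. by apply: cpow_ext => j; rewrite compm_assoc !cpow_proj_tup. Qed.

Definition cpow_add m n :
    Hom (cpow P a (m + n)) (cprod P (cpow P a m) (cpow P a n)) :=
  pairm P (tup P (fun k : 'I_m => cpow_proj (lshift n k)))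
          (tup P (fun k : 'I_n => cpow_proj (rshift m k))).

Definition cpow_add_inv m n :
    Hom (cprod P (cpow P a m) (cpow P a n)) (cpow P a (m + n)) :=
  tup P (fun k : 'I_(m + n) =>
    match split k with
    | inl j => compm (cpow_proj j) (pr1 P _ _)
    | inr j => compm (cpow_proj j) (pr2 P _ _)
    end).

Lemma cpow_add_iso m n : is_iso (cpow_add m n).
Proof.
exists (cpow_add_inv m n); split.
- apply: cpow_ext => k; rewrite compm_idr compm_assoc cpow_proj_tup.
  rewrite -{2}(splitK k); case: (split k) => j /=;
  by rewrite -compm_assoc ?pairm_pr1 ?pairm_pr2 cpow_proj_tup.
- apply: prod_ext; rewrite compm_idr compm_assoc ?pairm_pr1 ?pairm_pr2;
  apply: cpow_ext => j; rewrite compm_assoc !cpow_proj_tup.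
  + by rewrite -[lshift n j]/(unsplit (inl j)) unsplitK.
  + by rewrite -[rshift m j]/(unsplit (inr j)) unsplitK.
Qed.

End CartesianPower.

Lemma Dhom_ext m n (f g : Dhom m n) : (forall i, Dapp f i = Dapp g i) -> f = g.
Proof. by move=> efg; apply: val_inj; apply/ffunP => i; apply: efg. Qed.

Lemma Dapp_mkD m n (f : 'I_m -> 'I_n) mono_f i : Dapp (@mkD m n f mono_f) i = f i.
Proof. by rewrite /Dapp /= ffunE. Qed.

Lemma alpha1_beta m n (k : 'I_m) :
  Dcomp (alpha1 m n) (beta k) = beta (lshift n k).
Proof. by apply: Dhom_ext => i; rewrite !Dapp_mkD; apply: val_inj. Qed.

Lemma alpha2_beta m n (k : 'I_n) :
  Dcomp (alpha2 m n) (beta k) = beta (rshift m k).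
Proof. by apply: Dhom_ext => i; rewrite !Dapp_mkD; apply: val_inj => /=; lia. Qed.

Lemma beta_ord0 : beta (ord0 : 'I_1) = Did 2.
Proof. by apply: Dhom_ext => i; rewrite !Dapp_mkD; apply: val_inj => /=; lia. Qed.

Section SegalMaps.
Variables (C : category) (P : cartesian C) (Yo : nat -> C) (Y : DPopFunctor Yo).

Definition alpha_pair m n : Hom (Yo (m + n)) (cprod P (Yo m) (Yo n)) :=
  pairm P (Yh Y (alpha1 m n)) (Yh Y (alpha2 m n)).

Definition beta_tuple n : Hom (Yo n) (cpow P (Yo 1) n) :=
  tup P (fun j : 'I_n => Yh Y (beta j)).

Lemma beta_tuple_add m n :
  compm (cpow_add P (Yo 1) m n) (beta_tuple (m + n))
  = compm (Defs.fprod P (beta_tuple m) (beta_tuple n)) (alpha_pair m n).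
Proof.
apply: prod_ext; rewrite !compm_assoc ?pairm_pr1 ?pairm_pr2 -!compm_assoc
  ?pairm_pr1 ?pairm_pr2 !tup_comp; apply: cpow_ext => k;
  by rewrite !cpow_proj_tup -Yh_comp ?alpha1_beta ?alpha2_beta.
Qed.

Lemma beta_tuple1_iso : is_iso (beta_tuple 1).
Proof.
exists (pr1 P _ _); rewrite /beta_tuple /= beta_ord0 Yh_id pairm_pr1; split=> //.
apply: prod_ext; rewrite compm_assoc ?pairm_pr1 ?pairm_pr2 ?compm_idl ?compm_idr //.
by rewrite (bang_uniq (compm _ _)) (bang_uniq (pr2 P _ _)).
Qed.

Variables (W : forall a b : C, Hom a b -> Prop) (HW : equivalences P W).

Lemma weq_beta_tuple :
  (forall m n, W (alpha_pair m n)) -> W (bang P (Yo 0)) ->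
  forall n, W (beta_tuple n).
Proof.
move=> Walpha Wbang; elim=> [//|n IH].
apply: (weq_right HW (weq_iso HW (cpow_add_iso P (Yo 1) 1 n))).
change (W (compm (cpow_add P (Yo 1) 1 n) (beta_tuple (1 + n)))).
rewrite beta_tuple_add.
apply: (weq_comp HW (Walpha 1 n)).
exact: (weq_tensor HW (weq_iso HW beta_tuple1_iso) IH).
Qed.

Lemma weq_alpha_pair :
  (forall n, W (beta_tuple n)) -> forall m n, W (alpha_pair m n).
Proof.
move=> Wbeta m n; apply: (weq_right HW (weq_tensor HW (Wbeta m) (Wbeta n))).
rewrite -beta_tuple_add; apply: (weq_comp HW (Wbeta (m + n))).
exact: (weq_iso HW (cpow_add_iso P (Yo 1) m n)).
Qed.

End SegalMaps.

Unset Implicit Arguments.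
Set Strict Implicit.
Set Printing Implicit Defensive.

Theorem proposition3p1p8 (C : category) (P : cartesian C)
  (W : forall a b : C, Hom a b -> Prop) (HW : equivalences P W)
  (X : DFunctor C) (xs : colax P X) (Y : DPopFunctor (Fo X))
  (HY1 : forall m n, Yh Y (alpha1 m n) = compm (pr1 P _ _) (xi xs m n))
  (HY2 : forall m n, Yh Y (alpha2 m n) = compm (pr2 P _ _) (xi xs m n)) :
  ((W _ _ (xi0 xs) /\ (forall m n, W _ _ (xi xs m n))) <->
   ((forall m n, W _ _ (pairm P (Yh Y (alpha1 m n)) (Yh Y (alpha2 m n))))
    /\ W _ _ (bang P (Fo X 0))))
  /\
  (((forall m n, W _ _ (pairm P (Yh Y (alpha1 m n)) (Yh Y (alpha2 m n))))
    /\ W _ _ (bang P (Fo X 0))) <->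
   (forall n, W _ _ (tup P (fun j : 'I_n => Yh Y (beta j))))).
Proof.
have xiE m n : pairm P (Yh Y (alpha1 m n)) (Yh Y (alpha2 m n)) = xi xs m n.
  by rewrite HY1 HY2 -pairm_uniq.
rewrite (bang_uniq (xi0 xs)); split.
  split=> [[Wbang Wxi] | [Walpha Wbang]]; split=> // m n.
    by rewrite xiE; apply: Wxi.
  by rewrite -xiE; apply: Walpha.
split=> [[Walpha Wbang] | Wbeta].
  exact: (weq_beta_tuple HW Walpha Wbang).
by split; [apply: (weq_alpha_pair HW Wbeta) | apply: (Wbeta 0)].
Qed.
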